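(* The class of all irreflexive symmetric frames with at least $2$ elements is relatively elementary definable in $\mathcal{K}_2$.
   Context: A frame is a pair $(W,R)$ with $W$ non-empty and $R\subseteq W\times W$. For sets $A,B$ with $A\cap B=\emptyset$, $A\cup B\neq\emptyset$, and a function $\rho:A\to\wp(B)$, the galaxy $\mathcal{F}^{\rho}_{A,B}$ is the frame with universe $A\cup B$ and relation $\bigcup_{s\in A}(\{s\}\times\rho(s))\cup(B\times B)$. $\mathcal{K}_2$ is the class of all galaxies $\mathcal{F}^{\rho}_{A,B}$ with $|A|\ge4$, $|B|\ge4$ and $|\rho(s)|=2$ for all $s\in A$. First-order formulas use one binary relation symbol $\mathbf{R}$ and equality. A class $\mathcal{C}$ of frames is relatively elementary definable in a class $\mathcal{C}'$ if there are first-order formulas $\mathbf{U}(\mathbf{x}_1,\mathbf{x}_2)$, $\mathbf{E}(\mathbf{x}_1,\mathbf{x}_2,\mathbf{y}_1,\mathbf{y}_2)$, $\mathbf{A}(\mathbf{x}_1,\mathbf{x}_2,\mathbf{y}_1,\mathbf{y}_2)$ such that for every frame $(W,R)\in\mathcal{C}$ there is a frame $(W',R')\in\mathcal{C}'$ such that, letting $X$ be the set of pairs $(s_1,s_2)\in W'^2$ satisfying $\mathbf{U}$ in $(W',R')$, $\eta$ the binary relation on $X$ defined by $\mathbf{E}$ and $S$ the binary relation on $X$ defined by $\mathbf{A}$: $X$ is non-empty, $\eta$ is a congruence on $(X,S)$ (an equivalence relation on $X$ such that $a\,\eta\,c$ and $b\,\eta\,d$ imply ($aSb$ iff $cSd$)),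 and the quotient $(X,S)/\eta$ is isomorphic to $(W,R)$. *)

Inductive formula : Type :=
  | FFalse : formula
  | FEq : nat -> nat -> formula
  | FRel : nat -> nat -> formula
  | FNot : formula -> formula
  | FAnd : formula -> formula -> formula
  | FOr : formula -> formula -> formula
  | FImp : formula -> formula -> formula
  | FForall : nat -> formula -> formula
  | FExists : nat -> formula -> formula.

Definition update {W : Type} (v : nat -> W) (x : nat) (a : W) : nat -> W :=
  fun y => if Nat.eqb y x then a else v y.

Fixpoint sat {W : Type} (R : W -> W -> Prop) (v : nat -> W) (phi : formula) : Prop :=
  match phi with
  | FFalse => False
  | FEq x y => v x = v y
  | FRel x y => R (v x) (v y)
  | FNot p => ~ sat R v p
  | FAnd p q => sat R v p /\ sat R v q
  | FOr p q => sat R v p \/ sat R v q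
  | FImp p q => sat R v p -> sat R v q
  | FForall x p => forall a : W, sat R (update v x a) p
  | FExists x p => exists a : W, sat R (update v x a) p
  end.

Fixpoint fv_in (phi : formula) (P : nat -> Prop) : Prop :=
  match phi with
  | FFalse => True
  | FEq x y => P x /\ P y
  | FRel x y => P x /\ P y
  | FNot p => fv_in p P
  | FAnd p q | FOr p q | FImp p q => fv_in p P /\ fv_in q P
  | FForall x p | FExists x p => fv_in p (fun z => z = x \/ P z)
  end.

(** Valuations interpreting variables x1,x2 (= 0,1) and y1,y2 (= 2,3). *)
Definition env2 {W : Type} (s1 s2 : W) : nat -> W :=
  fun n => match n with 0 => s1 | _ => s2 end.
Definition env4 {W : Type} (s1 s2 t1 t2 : W) : nat -> W :=
  fun n => match n with 0 => s1 | 1 => s2 | 2 => t1 | _ => t2 end.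

Definition galaxy_rel (A B : Type) (rho : A -> B -> Prop) (x y : A + B) : Prop :=
  match x, y with
  | inl s, inr b => rho s b
  | inr _, inr _ => True
  | _, _ => False
  end.

Definition atleast4 (T : Type) : Prop :=
  exists a b c d : T, a <> b /\ a <> c /\ a <> d /\ b <> c /\ b <> d /\ c <> d.

Definition in_K2 (A B : Type) (rho : A -> B -> Prop) : Prop :=
  atleast4 A /\ atleast4 B /\
  forall s : A, exists b1 b2 : B, b1 <> b2 /\ forall b, rho s b <-> (b = b1 \/ b = b2).

(** The quotient (X,S)/eta of the structure interpreted by U, E, A in (W',R')
    is defined, and isomorphic to (W,R). X = {(s1,s2) | U}, eta, S as in the paper. *)
Definition interprets {W' : Type} (R' : W' -> W' -> Prop) (U E A : formula)
    {W : Type} (R : W -> W -> Prop) : Prop :=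
  let X := fun s1 s2 : W' => sat R' (env2 s1 s2) U in
  let eta := fun s1 s2 t1 t2 : W' => sat R' (env4 s1 s2 t1 t2) E in
  let S := fun s1 s2 t1 t2 : W' => sat R' (env4 s1 s2 t1 t2) A in
  (exists s1 s2, X s1 s2) /\
  (forall s1 s2, X s1 s2 -> eta s1 s2 s1 s2) /\
  (forall s1 s2 t1 t2, X s1 s2 -> X t1 t2 -> eta s1 s2 t1 t2 -> eta t1 t2 s1 s2) /\
  (forall s1 s2 t1 t2 u1 u2, X s1 s2 -> X t1 t2 -> X u1 u2 ->
      eta s1 s2 t1 t2 -> eta t1 t2 u1 u2 -> eta s1 s2 u1 u2) /\
  (forall a1 a2 b1 b2 c1 c2 d1 d2, X a1 a2 -> X b1 b2 -> X c1 c2 -> X d1 d2 ->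
      eta a1 a2 c1 c2 -> eta b1 b2 d1 d2 -> (S a1 a2 b1 b2 <-> S c1 c2 d1 d2)) /\
  (* (X,S)/eta is isomorphic to (W,R): via a map f : X -> W inducing a bijection
     X/eta -> W which is an isomorphism of relations *)
  (exists f : W' -> W' -> W,
      (forall w : W, exists s1 s2, X s1 s2 /\ f s1 s2 = w) /\
      (forall s1 s2 t1 t2, X s1 s2 -> X t1 t2 ->
          (eta s1 s2 t1 t2 <-> f s1 s2 = f t1 t2) /\
          (S s1 s2 t1 t2 <-> R (f s1 s2) (f t1 t2)))).

From Stdlib Require Import Lia ProofIrrelevance.

(* A symmetric irreflexive frame (W, R) is coded by a galaxy with B = W × {0,1}
   and with two kinds of points in A: for every vertex w, two "vertex points"
   (w,i) seeing both copies of w, and for every ordered edge (w,u) an "edge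
   point" seeing (w,0) and (u,1).  The pairs defined by U are the pairs of
   distinct loop-free points, i.e. points of A, with the same successors; since R is irreflexive an edge
   point never has the successors of a vertex point, so these pairs are exactly
   the pairs of vertex points of one vertex, and E identifies those of the same
   vertex.  Vertices w and u are R-related iff some edge point sees a successor
   of w and a successor of u that w does not see; symmetry of R makes the
   orientation of that edge point irrelevant. *)

Definition FIff (p q : formula) : formula := FAnd (FImp p q) (FImp q p).

Definition twin_formula : formula :=
  FAnd (FNot (FRel 0 0)) (FAnd (FNot (FRel 1 1)) (FAnd (FNot (FEq 0 1))
    (FForall 4 (FIff (FRel 0 4) (FRel 1 4))))).

Definition same_succ_formula : formula := FForall 4 (FIff (FRel 0 4) (FRel 2 4)).

Definition linked_formula : formula :=
  FExists 4 (FExists 5 (FExists 6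
    (FAnd (FNot (FRel 4 4)) (FAnd (FRel 4 5) (FAnd (FRel 4 6)
      (FAnd (FRel 0 5) (FAnd (FRel 2 6) (FNot (FRel 0 6))))))))).

Section FormulaSemantics.
Variables (T : Type) (Q : T -> T -> Prop).

Lemma sat_twin (s1 s2 : T) :
  sat Q (env2 s1 s2) twin_formula <->
  ~ Q s1 s1 /\ ~ Q s2 s2 /\ s1 <> s2 /\ (forall a, Q s1 a <-> Q s2 a).
Proof. cbn; firstorder. Qed.

Lemma sat_same_succ (s1 s2 t1 t2 : T) :
  sat Q (env4 s1 s2 t1 t2) same_succ_formula <-> (forall a, Q s1 a <-> Q t1 a).
Proof. cbn; firstorder. Qed.

Lemma sat_linked (s1 s2 t1 t2 : T) :
  sat Q (env4 s1 s2 t1 t2) linked_formula <->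
  exists s b c, ~ Q s s /\ Q s b /\ Q s c /\ Q s1 b /\ Q t1 c /\ ~ Q s1 c.
Proof. cbn; firstorder. Qed.

End FormulaSemantics.

Lemma interprets_of_surjection {W' W : Type} (R' : W' -> W' -> Prop)
    (U E A : formula) (R : W -> W -> Prop) (f : W' -> W' -> W) :
  inhabited W ->
  (forall w, exists s1 s2, sat R' (env2 s1 s2) U /\ f s1 s2 = w) ->
  (forall s1 s2 t1 t2, sat R' (env2 s1 s2) U -> sat R' (env2 t1 t2) U ->
     (sat R' (env4 s1 s2 t1 t2) E <-> f s1 s2 = f t1 t2) /\
     (sat R' (env4 s1 s2 t1 t2) A <-> R (f s1 s2) (f t1 t2))) ->
  interprets R' U E A R.
Proof.
  intros [w0] f_onto f_spec.
  destruct (f_onto w0) as (s1 & s2 & X12 & _).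
  split; [now exists s1, s2 |].
  split; [intros ? ? X; now apply (f_spec _ _ _ _ X X) |].
  split.
  { intros ? ? ? ? X Y e. apply (f_spec _ _ _ _ Y X).
    symmetry. now apply (f_spec _ _ _ _ X Y). }
  split.
  { intros ? ? ? ? ? ? X Y Z e e'. apply (f_spec _ _ _ _ X Z).
    apply (f_spec _ _ _ _ X Y) in e. apply (f_spec _ _ _ _ Y Z) in e'. congruence. }
  split.
  { intros ? ? ? ? ? ? ? ? Xa Xb Xc Xd e e'.
    apply (f_spec _ _ _ _ Xa Xc) in e. apply (f_spec _ _ _ _ Xb Xd) in e'.
    rewrite (proj2 (f_spec _ _ _ _ Xa Xb)), (proj2 (f_spec _ _ _ _ Xc Xd)), e, e'.
    reflexivity. }
  now exists f.
Qed.

Lemma galaxy_irrefl_inl (A B : Type) (rho : A -> B -> Prop) (x : A + B) :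
  ~ galaxy_rel A B rho x x -> exists s, x = inl s.
Proof.
  destruct x as [s | b]; intros loop; [now exists s |].
  exfalso; apply loop; exact I.
Qed.

Section GraphGalaxy.
Variables (W : Type) (R : W -> W -> Prop).
Hypothesis R_irrefl : forall w, ~ R w w.
Hypothesis R_sym : forall w u, R w u -> R u w.

Definition edge : Type := {p : W * W | R (fst p) (snd p)}.
Definition graph_A : Type := ((W * bool) + edge)%type.
Definition graph_B : Type := (W * bool)%type.

Definition graph_rho (s : graph_A) (b : graph_B) : Prop :=
  match s with
  | inl (w, _) => fst b = w
  | inr e => b = (fst (proj1_sig e), false) \/ b = (snd (proj1_sig e), true)
  end.

Local Notation G := (galaxy_rel graph_A graph_B graph_rho).

Definition vertex_copy (w : W) (i : bool) : graph_A + graph_B := inl (inl (w, i)).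

Definition vertex_of (d : W) (x : graph_A + graph_B) : W :=
  match x with inl (inl (w, _)) => w | _ => d end.

Lemma graph_in_K2 : (exists w u : W, w <> u) -> in_K2 graph_A graph_B graph_rho.
Proof.
  intros (w & u & neq). split; [| split].
  - exists (inl (w, false)), (inl (w, true)), (inl (u, false)), (inl (u, true)).
    repeat split; intro E; inversion E; subst; tauto.
  - exists (w, false), (w, true), (u, false), (u, true).
    repeat split; intro E; inversion E; subst; tauto.
  - intros [[x j] | [[p q] r]]; cbn.
    + exists (x, false), (x, true). split; [discriminate |].
      intros [y [|]]; cbn; split; intuition congruence.
    + exists (p, false), (q, true). split; [discriminate | tauto].
Qed.

Lemma graph_rho_vertex_ext (w : W) (i : bool) (s : graph_A) :
  (forall b, graph_rho (inl (w, i)) b <-> graph_rho s b) -> exists j, s = inl (w, j).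
Proof.
  intros H. destruct s as [[u j] | [[p q] r]]; cbn in H.
  - assert (same_vertex : w = u) by exact (proj1 (H (w, false)) eq_refl).
    subst. now exists j.
  - exfalso.
    assert (p = w) by (destruct (proj1 (H (w, false)) eq_refl); congruence).
    assert (q = w) by (destruct (proj1 (H (w, true)) eq_refl); congruence).
    subst. exact (R_irrefl _ r).
Qed.

Lemma graph_rho_edge_ext (e e' : edge) :
  (forall b, graph_rho (inr e) b <-> graph_rho (inr e') b) -> e = e'.
Proof.
  destruct e as [[p q] r], e' as [[p' q'] r']; cbn; intros H.
  assert (p = p') by (destruct (proj1 (H (p, false)) (or_introl eq_refl)); congruence).
  assert (q = q') by (destruct (proj1 (H (q, true)) (or_intror eq_refl)); congruence).
  subst. f_equal; apply proof_irrelevance.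
Qed.

Lemma twin_vertex_copies (w : W) :
  sat G (env2 (vertex_copy w false) (vertex_copy w true)) twin_formula.
Proof.
  apply sat_twin; cbn. split; [tauto |]. split; [tauto |]. split; [discriminate |].
  intros [? | ?]; tauto.
Qed.

Lemma twin_inv (s1 s2 : graph_A + graph_B) :
  sat G (env2 s1 s2) twin_formula ->
  exists w i j, s1 = vertex_copy w i /\ s2 = vertex_copy w j.
Proof.
  rewrite sat_twin. intros (loop1 & loop2 & neq & same).
  destruct (galaxy_irrefl_inl _ _ _ _ loop1) as [a ->].
  destruct (galaxy_irrefl_inl _ _ _ _ loop2) as [a' ->].
  assert (rho_eq : forall b, graph_rho a b <-> graph_rho a' b) by exact (fun b => same (inr b)).
  destruct a as [[w i] | e].
  - destruct (graph_rho_vertex_ext w i a' rho_eq) as [j ->]. now exists w, i, j.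
  - exfalso. destruct a' as [[w j] | e'].
    + destruct (graph_rho_vertex_ext w j (inr e)) as [? E]; [firstorder | discriminate].
    + apply neq. do 2 f_equal. now apply graph_rho_edge_ext.
Qed.

Lemma same_succ_vertex_copies (w u : W) (i k : bool) (s2 t2 : graph_A + graph_B) :
  sat G (env4 (vertex_copy w i) s2 (vertex_copy u k) t2) same_succ_formula <-> w = u.
Proof.
  rewrite sat_same_succ. split.
  - intros H. exact (proj1 (H (inr (w, false))) eq_refl).
  - intros <- [? | ?]; cbn; tauto.
Qed.

Lemma linked_vertex_copies (w u : W) (i k : bool) (s2 t2 : graph_A + graph_B) :
  sat G (env4 (vertex_copy w i) s2 (vertex_copy u k) t2) linked_formula <-> R w u.
Proof.
  rewrite sat_linked. split.
  - intros (s & b & c & loop & sb & sc & wb & uc & not_wc).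
    destruct (galaxy_irrefl_inl _ _ _ _ loop) as [a ->].
    destruct b as [| [x l]]; [destruct wb |]. destruct c as [| [y m]]; [destruct uc |].
    cbn in *. subst.
    destruct a as [[v j] | [[p q] r]]; cbn in *; [congruence |].
    destruct sb as [E | E], sc as [E' | E']; inversion E; inversion E'; subst;
      [congruence | assumption | now apply R_sym | congruence].
  - intros r. exists (inl (inr (exist _ (w, u) r))), (inr (w, false)), (inr (u, true)).
    cbn. repeat split; auto. intros <-. exact (R_irrefl _ r).
Qed.

Lemma graph_galaxy_interprets :
  inhabited W -> interprets G twin_formula same_succ_formula linked_formula R.
Proof.
  intros [d].
  apply interprets_of_surjection with (f := fun s1 _ => vertex_of d s1);
    [now constructor | |].
  - intros w. exists (vertex_copy w false), (vertex_copy w true).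
    split; [apply twin_vertex_copies | reflexivity].
  - intros s1 s2 t1 t2 X1 X2.
    destruct (twin_inv _ _ X1) as (w & i & j & -> & ->).
    destruct (twin_inv _ _ X2) as (u & k & l & -> & ->).
    split; [apply same_succ_vertex_copies | apply linked_vertex_copies].
Qed.

End GraphGalaxy.

Theorem lemma47 :
  exists U E A : formula,
    fv_in U (fun z => z = 0 \/ z = 1) /\
    fv_in E (fun z => z = 0 \/ z = 1 \/ z = 2 \/ z = 3) /\
    fv_in A (fun z => z = 0 \/ z = 1 \/ z = 2 \/ z = 3) /\
    forall (W : Type) (R : W -> W -> Prop),
      (forall w, ~ R w w) ->
      (forall w u, R w u -> R u w) ->
      (exists w u : W, w <> u) ->
      exists (GA GB : Type) (rho : GA -> GB -> Prop),
        in_K2 GA GB rho /\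
        interprets (galaxy_rel GA GB rho) U E A R.
Proof.
  exists twin_formula, same_succ_formula, linked_formula.
  split; [cbn; lia |]. split; [cbn; lia |]. split; [cbn; lia |].
  intros W R R_irrefl R_sym (w & u & neq).
  exists (graph_A W R), (graph_B W), (graph_rho W R). split.
  - apply graph_in_K2. now exists w, u.
  - apply graph_galaxy_interprets; [assumption | assumption | now constructor].
Qed.
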